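(* Let $G=(V,E)$ be an event graph and let $\mathcal C$ be any sink component of $\mathrm{dec}(G)$. Then for every vertex $v\in V$ there exists a subset $Y\subseteq\mathcal U_{|V}$ such that $(v,Y)$ is a node of $\mathcal C$.
   Context: An event graph is a finite, connected, undirected graph $G=(V,E)$, with $n=|V|$, in which every node $v$ carries a label that is either $\mathtt{i}x_v$ (insertion of $x_v$) or $\mathtt{d}x_v$ (deletion of $x_v$), where $x_v$ is an element of a finite universe $\mathcal U$. Write $\mathcal U_{|V}=\{x_v : v\in V\}$. It is assumed that for each $x\in\mathcal U_{|V}$ at least one node is labeled $\mathtt{i}x$ and at least one node is labeled $\mathtt{d}x$. The decorated graph $\mathrm{dec}(G)$ is the directed graph with vertex set $V\times 2^{\mathcal U_{|V}}$ in which $((u,X),(v,Y))$ is an edge if and only if $\{u,v\}\in E$ and $Y=X\cup\{x_v\}$ when $v$ is labeled $\mathtt{i}x_v$, respectively $Y=X\setminus\{x_v\}$ when $v$ is labeled $\mathtt{d}x_v$. A sink component of $\mathrm{dec}(G)$ is a strongly connected component of $\mathrm{dec}(G)$ from which no edge leads to a different strongly connected component. *)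

From mathcomp Require Import all_boot.
Set Implicit Arguments. Unset Strict Implicit. Unset Printing Implicit Defensive.

Section EventGraph.
Variables (V U : finType).
(* e : adjacency relation of the undirected graph (symmetric, irreflexive);
   ins v = true iff v is labeled "i x_v", false iff labeled "d x_v";
   lab v = x_v. *)
Variables (e : rel V) (ins : pred V) (lab : V -> U).

Definition UV : {set U} := [set lab v | v in V].

Definition dec_edge (p q : V * {set U}) : bool :=
  e p.1 q.1 &&
  (q.2 == (if ins q.1 then lab q.1 |: p.2 else p.2 :\ lab q.1)).

Definition dec_node (p : V * {set U}) : bool := p.2 \subset UV.

Definition dec_reach (p q : V * {set U}) : bool := connect dec_edge p q.

Definition is_scc (C : {set V * {set U}}) : Prop :=
  exists p, dec_node p /\
    C = [set q | dec_node q && dec_reach p q && dec_reach q p].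

Definition is_sink_component (C : {set V * {set U}}) : Prop :=
  is_scc C /\ (forall p q, p \in C -> dec_edge p q -> q \in C).

End EventGraph.

Definition event_graph (V U : finType) (e : rel V) (ins : pred V) (lab : V -> U)
  : Prop :=
  [/\ symmetric e, irreflexive e, (forall u v : V, connect e u v) &
      (forall x, x \in UV lab ->
         (exists v, ins v /\ lab v = x) /\ (exists v, ~~ ins v /\ lab v = x))].

From mathcomp Require Import all_boot.

(* Idea: a move of G from u to a neighbour w lifts to an edge of dec(G)
   out of any decorated node (u, X), namely to (w, X') where X' is X with
   the label of w inserted or deleted.  Since a sink component has no
   outgoing edges, it is closed under such lifted moves, hence under
   lifted paths.  The component is nonempty (it is the class of a node),
   and G is connected, so every vertex v is the endpoint of a path
   starting at the first coordinate of some node of C; lifting that path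
   yields a node (v, Y) of C, and Y lies in U_{|V} because every node of
   C is a node of dec(G). *)

Set Implicit Arguments.
Unset Strict Implicit.
Unset Printing Implicit Defensive.

Section SinkComponent.

Variables (V U : finType) (e : rel V) (ins : pred V) (lab : V -> U).
Variable C : {set V * {set U}}.
Hypothesis sinkC : is_sink_component e ins lab C.

Definition apply_op (X : {set U}) (w : V) : {set U} :=
  if ins w then lab w |: X else X :\ lab w.

Lemma dec_edge_lift (u w : V) (X : {set U}) :
  e u w -> dec_edge e ins lab (u, X) (w, apply_op X w).
Proof. by move=> euw; rewrite /dec_edge /= euw eqxx. Qed.

Lemma sink_component_nonempty : exists p, p \in C.
Proof.
case: sinkC => -[p [p_node ->]] _.
by exists p; rewrite inE p_node /dec_reach connect0.
Qed.

Lemma sink_component_node (p : V * {set U}) :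
  p \in C -> p.2 \subset UV lab.
Proof. by case: sinkC => -[q [_ ->]] _; rewrite inE => /andP[/andP[]]. Qed.

Lemma sink_component_path (s : seq V) (u : V) (X : {set U}) :
  (u, X) \in C -> path e u s -> exists Y, (last u s, Y) \in C.
Proof.
case: sinkC => _ closedC.
elim: s u X => [|w s IH] u X uXC /=; first by exists X.
case/andP=> euw path_ws.
apply: (IH w (apply_op X w)) => //.
exact: closedC uXC (dec_edge_lift X euw).
Qed.

End SinkComponent.

Theorem mainTheorem1 (V U : finType) (e : rel V) (ins : pred V) (lab : V -> U)
  (hG : event_graph e ins lab) (C : {set V * {set U}})
  (hC : is_sink_component e ins lab C) :
  forall v : V, exists Y : {set U}, Y \subset UV lab /\ (v, Y) \in C.
Proof.
case: hG => _ _ connected_G _ v.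
have [[u X] uXC] := sink_component_nonempty hC.
have /connectP[s path_us ->] := connected_G u v.
have [Y YC] := sink_component_path hC uXC path_us.
by exists Y; split; first exact: (sink_component_node hC YC).
Qed.
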